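(* Let $S$ be a finite GCD closed set of positive integers. If the element $x_i\in S$ generates a double-chain set in $S$, then $\Psi_{S,\frac1N}(x_i)\neq 0$.
   Context: All order notions are with respect to divisibility on the positive integers, where the meet is $\gcd$; $S$ is GCD closed if $\gcd(x,y)\in S$ for all $x,y\in S$. $C_S(x)$ is the set of elements of $S$ covered by $x$ in $(S,\mid)$; $\mathrm{meetcl}(C)$ is the set of gcds of all nonempty finite subsets of $C$. An element $x\in S$ generates a double-chain set in $S$ if $\mathrm{meetcl}(C_S(x))\setminus C_S(x)$ is a union of two disjoint (possibly empty) chains under divisibility. $\mu_S$ is the Möbius function of $(S,\mid)$ and $\Psi_{S,\frac1N}(x_i)=\sum_{x_j\in S,\ x_j\mid x_i}\mu_S(x_j,x_i)/x_j$. *)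

From HB Require Import structures.
From mathcomp Require Import all_boot all_order all_algebra.
Set Implicit Arguments. Unset Strict Implicit. Unset Printing Implicit Defensive.
Import Order.TTheory GRing.Theory Num.Theory.

(* A finite set S of positive integers is represented by a sequence S : seq nat
   (duplicates, if any, are irrelevant: all sums below range over undup S). *)

Definition gcd_closed (S : seq nat) : Prop :=
  forall x y, x \in S -> y \in S -> gcdn x y \in S.

Definition covered_by (S : seq nat) (y x : nat) : bool :=
  [&& y \in S, x \in S, y %| x, y != x &
   ~~ has (fun z => [&& y %| z, z %| x, z != y & z != x]) S].

Definition covset (S : seq nat) (x : nat) : seq nat :=
  [seq y <- undup S | covered_by S y x].

Definition in_meetcl (C : seq nat) (d : nat) : Prop :=
  exists s : seq nat, [/\ s != [::], all (mem C) s & d = \big[gcdn/0]_(c <- s) c].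

Definition is_chain (A : seq nat) : Prop :=
  forall a b, a \in A -> b \in A -> (a %| b) || (b %| a).

Definition double_chain_gen (S : seq nat) (x : nat) : Prop :=
  exists A B : seq nat,
    [/\ forall d, (in_meetcl (covset S x) d /\ d \notin covset S x) <-> (d \in A \/ d \in B),
        forall d, d \in A -> d \notin B,
        is_chain A & is_chain B].

(* Fuel k; since elements are positive, proper divisors
   are smaller, so fuel x.+1 suffices. *)
Fixpoint mu_rec (S : seq nat) (k : nat) (y x : nat) : int :=
  match k with
  | 0 => 0%R
  | k'.+1 =>
    if y == x then 1%R
    else if y %| x then
      (- \sum_(z <- undup S | (dvdn y z) && (dvdn z x) && (z != x)) mu_rec S k' y z)%R
    else 0%R
  end.

Definition mobius (S : seq nat) (y x : nat) : int := mu_rec S x.+1 y x.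

Definition Psi_inv (S : seq nat) (x : nat) : rat :=
  (\sum_(xj <- undup S | dvdn xj x) ((mobius S xj x)%:~R / xj%:R))%R.

From mathcomp Require Import all_boot all_order all_algebra.
From mathcomp Require Import zify ring lra.
Import Order.TTheory GRing.Theory Num.Theory.
Set Implicit Arguments. Unset Strict Implicit. Unset Printing Implicit Defensive.
Local Open Scope ring_scope.

(* Write C for the set C_S(x) of elements covered by x.  The proof has three parts.
   1. Inclusion-exclusion along gcds: for f : nat -> V (V an abelian group) the quantity
      incl_excl f y C = sum_(T subset C) (-1)^|T| f(gcd(y, T)) is defined by recursion on C.
      Since S is gcd-closed and x is the only element of S dividing x but none of its
      covers, Moebius inversion gives sum_(d | x) mu_S(d,x) f(d) = incl_excl f x C
      (mobius_sum_covers).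
   2. The double-chain hypothesis makes C an antichain of proper divisors of x among whose
      pairwise gcds no three are pairwise incomparable (covers_dchain_antichain).  In such
      an antichain some c has a best partner c0: gcd(c,c1) | gcd(c,c0) for every c1 <> c
      (exists_best_partner), and then removing c from C changes incl_excl f x C by
      -(f c - f (gcd c c0)) (incl_excl_remove).
   3. For f = 1/N this change is positive, so by induction incl_excl (1/N) x C > 1/x as soon
      as |C| >= 2, while it equals 1/x or 1/x - 1/c for |C| = 0 or 1: it is never 0. *)

Section InclusionExclusion.
Variable V : zmodType.
Implicit Types (f h : nat -> V) (y z c : nat) (cs : seq nat).

(* incl_excl f y cs = sum over subsequences T of cs of (-1)^|T| f (gcd of y and T). *)
Fixpoint incl_excl f y cs : V :=
  if cs is c :: cs' then incl_excl f y cs' - incl_excl f (gcdn y c) cs' else f y.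
Arguments incl_excl : simpl never.

Lemma incl_excl_nil f y : incl_excl f y [::] = f y.
Proof. by []. Qed.

Lemma incl_excl_cons f y c cs :
  incl_excl f y (c :: cs) = incl_excl f y cs - incl_excl f (gcdn y c) cs.
Proof. by []. Qed.

(* If y divides some c in cs, the terms with and without c cancel pairwise. *)
Lemma incl_excl_absorbed f y cs : has (dvdn y) cs -> incl_excl f y cs = 0.
Proof.
elim: cs y => [|c cs IH] y //= /orP [y_dvd_c | /hasP [d d_in y_dvd_d]].
  by rewrite incl_excl_cons (gcdn_idPl y_dvd_c) subrr.
have gcd_dvd_d : (gcdn y c %| d)%N by exact: dvdn_trans (dvdn_gcdl y c) y_dvd_d.
by rewrite incl_excl_cons !IH ?subrr //; apply/hasP; exists d.
Qed.

Lemma incl_excl_swap f y a b cs :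
  incl_excl f y (a :: b :: cs) = incl_excl f y (b :: a :: cs).
Proof.
rewrite !incl_excl_cons -!gcdnA (gcdnC a b).
by rewrite !opprB !addrA !(addrAC _ _ (incl_excl f (gcdn y (gcdn b a)) cs)) addrAC.
Qed.

Lemma incl_excl_move f y s1 c s2 :
  incl_excl f y (s1 ++ c :: s2) = incl_excl f y (c :: s1 ++ s2).
Proof. by elim: s1 y => [|b s1 IH] y //=; rewrite incl_excl_swap incl_excl_cons !IH. Qed.

Lemma incl_excl_perm f y cs cs' : perm_eq cs cs' -> incl_excl f y cs = incl_excl f y cs'.
Proof.
elim: cs cs' y => [|c cs IH] cs' y; first by rewrite perm_sym => /perm_nilP ->.
move=> cs_cs'; have : c \in cs' by rewrite -(perm_mem cs_cs') mem_head.
move: cs_cs' => /[swap] /splitPr [s1 s2] cs_cs'.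
have perm_rest : perm_eq cs (s1 ++ s2).
  by rewrite -(perm_cons c) (perm_trans cs_cs') // -cat1s perm_catCA.
by rewrite incl_excl_move !incl_excl_cons !(IH (s1 ++ s2)).
Qed.

(* Elements of cs dividing g are absorbed once g is present. *)
Lemma incl_excl_dominated f y g rest : all (dvdn^~ g) rest ->
  incl_excl f y (g :: rest) = f y - f (gcdn y g).
Proof.
elim: rest => [|r rest IH] //= /andP [r_dvd_g rest_dvd_g].
rewrite incl_excl_swap incl_excl_cons (@incl_excl_absorbed _ (gcdn y r)) ?subr0 ?IH //=.
by rewrite (dvdn_trans (dvdn_gcdr _ _) r_dvd_g).
Qed.

Lemma incl_excl_gcd_map f y z cs : (y %| z)%N ->
  incl_excl f y (map (gcdn z) cs) = incl_excl f y cs.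
Proof.
elim: cs y => [|c cs IH] y y_dvd_z //=.
rewrite !incl_excl_cons gcdnA (gcdn_idPl y_dvd_z) !IH //.
exact: dvdn_trans (dvdn_gcdl y c) y_dvd_z.
Qed.

Lemma incl_excl_sum (I : Type) (r : seq I) (P : pred I) (F : I -> nat -> V) y cs :
  incl_excl (fun g => \sum_(i <- r | P i) F i g) y cs
  = \sum_(i <- r | P i) incl_excl (F i) y cs.
Proof.
elim: cs y => [|c cs IH] y; first by apply: eq_bigr => i _.
by rewrite incl_excl_cons !IH -sumrB; apply: eq_bigr => i _; rewrite incl_excl_cons.
Qed.

Lemma incl_excl_eq_in (s : seq nat) f h y cs :
  {in s, f =1 h} -> {in s &, forall a b, gcdn a b \in s} -> y \in s -> all (mem s) cs ->
  incl_excl f y cs = incl_excl h y cs.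
Proof.
move=> eq_fh s_closed; elim: cs y => [|c cs IH] y y_in /=; first by rewrite !incl_excl_nil eq_fh.
by case/andP => c_in cs_in; rewrite !incl_excl_cons !IH ?s_closed.
Qed.

Lemma incl_excl_indicator (v : V) z y cs :
  incl_excl (fun g => v *+ (z %| g)%N) y cs = v *+ ((z %| y) && all (fun c => ~~ (z %| c)) cs)%N.
Proof.
elim: cs y => [|c cs IH] y; first by rewrite andbT.
rewrite incl_excl_cons !IH dvdn_gcd /=.
by case: (z %| y)%N; case: (z %| c)%N; case: (all _ cs); rewrite ?subrr ?subr0.
Qed.

Lemma incl_excl_remove f y C c c0 :
  uniq C -> c \in C -> (c %| y)%N -> c0 \in C -> c0 != c ->
  {in C, forall c1, c1 != c -> (gcdn c c1 %| gcdn c c0)%N} ->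
  incl_excl f y C = incl_excl f y (rem c C) - (f c - f (gcdn c c0)).
Proof.
move=> C_uniq c_in c_dvd_y c0_in c0_neq_c partner_max.
have c0_rest : c0 \in rem c C by rewrite mem_rem_uniq // inE c0_neq_c.
have g_in : gcdn c c0 \in map (gcdn c) (rem c C) by apply: map_f.
have rest_dvd_g : all (dvdn^~ (gcdn c c0)) (rem (gcdn c c0) (map (gcdn c) (rem c C))).
  apply/allP => _ /mem_rem /mapP [c1 c1_rest ->].
  move: c1_rest; rewrite mem_rem_uniq // inE => /andP [c1_neq_c c1_in].
  exact: partner_max.
rewrite (incl_excl_perm _ _ (perm_to_rem c_in)) incl_excl_cons (gcdn_idPr c_dvd_y).
rewrite -(incl_excl_gcd_map _ _ (dvdnn c)) (incl_excl_perm _ _ (perm_to_rem g_in)).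
by rewrite incl_excl_dominated // gcdnA gcdnn.
Qed.

End InclusionExclusion.
Arguments incl_excl : simpl never.

Lemma sum_seq_pick (V : zmodType) (I : eqType) (r : seq I) (P : pred I) (F : I -> V) j :
  uniq r -> j \in r -> \sum_(i <- r | P i) F i *+ (i == j) = F j *+ P j.
Proof.
move=> r_uniq j_in; rewrite big_mkcond (bigD1_seq j) //= eqxx big1 ?addr0.
  by case: (P j).
by move=> i /negbTE ->; case: (P i).
Qed.

Section Mobius.
Variable S : seq nat.
Hypothesis S_pos : all (fun x => 0 < x)%N S.

Lemma mem_pos x : x \in S -> (0 < x)%N.
Proof. by move/(allP S_pos). Qed.

Lemma mu_rec_fuel y z k1 k2 : (0 < z)%N -> (z < k1)%N -> (z < k2)%N ->
  mu_rec S k1 y z = mu_rec S k2 y z.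
Proof.
elim/ltn_ind: z k1 k2 => z IH [//|k1] [//|k2] z_pos z_lt1 z_lt2 /=.
case: eqP => // _; case: ifP => // _; congr (- _).
rewrite big_seq_cond [RHS]big_seq_cond; apply: eq_bigr => w.
case/andP => w_in /andP [/andP [_ w_dvd_z] w_neq_z].
have w_pos : (0 < w)%N by apply: mem_pos; rewrite -mem_undup.
have w_lt_z : (w < z)%N by rewrite ltn_neqAle w_neq_z dvdn_leq.
by apply: IH => //; apply: leq_trans w_lt_z _.
Qed.

Lemma mobiusE y z : (0 < z)%N ->
  mobius S y z = if y == z then 1 else if (y %| z)%N then
     - \sum_(w <- undup S | (y %| w)%N && (w %| z)%N && (w != z)) mobius S y w else 0.
Proof.
move=> z_pos; rewrite /mobius /=; case: eqP => // _; case: ifP => // _; congr (- _).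
rewrite big_seq_cond [RHS]big_seq_cond; apply: eq_bigr => w.
case/andP => w_in /andP [/andP [_ w_dvd_z] w_neq_z].
have w_pos : (0 < w)%N by apply: mem_pos; rewrite -mem_undup.
by rewrite (@mu_rec_fuel y w z w.+1) // ltn_neqAle w_neq_z dvdn_leq.
Qed.

Lemma mobius_orthogonality y g : y \in S -> g \in S ->
  \sum_(z <- undup S | (y %| z)%N && (z %| g)%N) mobius S y z = (y == g)%:R.
Proof.
move=> y_in g_in; have [<-|y_neq_g] := eqVneq y g.
  rewrite -big_filter (bigD1_seq y) ?mem_filter ?dvdnn ?mem_undup ?filter_uniq ?undup_uniq //=.
  rewrite /mobius /= eqxx big_filter_cond big1 ?addr0 // => z.
  by case/andP => /andP [y_dvd_z z_dvd_y]; rewrite eqn_dvd z_dvd_y y_dvd_z.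
have [y_dvd_g|y_ndvd_g] := boolP (y %| g)%N; last first.
  rewrite big1 // => z /andP [y_dvd_z z_dvd_g].
  by rewrite (dvdn_trans y_dvd_z z_dvd_g) in y_ndvd_g.
rewrite -big_filter (bigD1_seq g) ?mem_filter ?y_dvd_g ?dvdnn ?mem_undup //=;
  last by rewrite filter_uniq ?undup_uniq.
by rewrite big_filter_cond mobiusE ?mem_pos // (negbTE y_neq_g) y_dvd_g addNr.
Qed.

Lemma covsetP x c : c \in covset S x ->
  [/\ c \in S, (c %| x)%N, c != x
    & ~~ has (fun z => [&& c %| z, z %| x, z != c & z != x])%N S].
Proof. by rewrite mem_filter => /andP [/and5P []]. Qed.

(* Within S, x is the only divisor of x dividing none of the elements covered by x:
   a proper divisor z of x lies below a maximal proper divisor of x in S, a cover. *)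
Lemma covers_detect x z : x \in S -> z \in S ->
  ((z %| x) && all (fun c => ~~ (z %| c)) (covset S x))%N = (z == x).
Proof.
move=> x_in z_in; have [->|z_neq_x] := eqVneq z x.
  rewrite dvdnn; apply/allP => c /covsetP [_ c_dvd_x c_neq_x _].
  by apply: contra c_neq_x => x_dvd_c; rewrite eqn_dvd c_dvd_x.
apply/negbTE/andP => -[z_dvd_x /allP z_ndvd_covers].
pose between n := [&& n \in S, z %| n, n %| x & n != x]%N.
have ex_between : exists n, between n by exists z; rewrite /between z_in dvdnn z_dvd_x.
have between_le : forall n, between n -> (n <= x)%N.
  by move=> n /and4P [_ _ n_dvd_x _]; apply: dvdn_leq (mem_pos x_in) n_dvd_x.
case: (ex_maxnP ex_between between_le) => m /and4P [m_in z_dvd_m m_dvd_x m_neq_x] m_max.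
have m_cover : m \in covset S x.
  rewrite mem_filter mem_undup m_in andbT /covered_by m_in x_in m_dvd_x m_neq_x /=.
  apply/hasP => -[u u_in /and4P [m_dvd_u u_dvd_x u_neq_m u_neq_x]].
  have u_le_m : (u <= m)%N.
    by apply: m_max; rewrite /between u_in (dvdn_trans z_dvd_m m_dvd_u) u_dvd_x u_neq_x.
  by move: u_neq_m; rewrite eqn_leq u_le_m dvdn_leq // mem_pos.
by move: (z_ndvd_covers m m_cover); rewrite z_dvd_m.
Qed.

Lemma mobius_sum_covers (V : zmodType) (f : nat -> V) x : gcd_closed S -> x \in S ->
  \sum_(d <- undup S | (d %| x)%N) f d *~ mobius S d x = incl_excl f x (covset S x).
Proof.
move=> S_closed x_in; set s := undup S.
pose weights g := \sum_(d <- s) \sum_(z <- s | (d %| z)%N) (f d *~ mobius S d z) *+ (z %| g)%N.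
have f_weights : {in s, f =1 weights}.
  move=> g g_in; rewrite /weights big_seq; move: (g_in); rewrite mem_undup => g_inS.
  have inner d : d \in s -> \sum_(z <- s | (d %| z)%N) (f d *~ mobius S d z) *+ (z %| g)%N
                            = f d *+ (d == g).
    rewrite mem_undup => d_in; rewrite -mulrz_nat -mobius_orthogonality //.
    by rewrite mulrz_sumr big_mkcondr; apply: eq_bigr => z _; case: (z %| g)%N.
  by rewrite (eq_bigr _ inner) -big_seq sum_seq_pick ?undup_uniq.
rewrite (incl_excl_eq_in f_weights) ?mem_undup //; last first.
- by apply/allP => c; rewrite mem_filter => /andP [].
- by move=> a b; rewrite !mem_undup; apply: S_closed.
rewrite /weights (incl_excl_sum _ _ (fun d g =>
  \sum_(z <- s | (d %| z)%N) (f d *~ mobius S d z) *+ (z %| g)%N)).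
rewrite big_mkcond /=; apply: eq_big_seq => d d_in.
rewrite (incl_excl_sum _ _ (fun z g => (f d *~ mobius S d z) *+ (z %| g)%N)) big_seq_cond.
under eq_bigr => z /andP [z_in _].
  rewrite mem_undup in z_in; rewrite incl_excl_indicator covers_detect //.
over.
by rewrite -big_seq_cond sum_seq_pick ?mem_undup ?undup_uniq //; case: (d %| x)%N.
Qed.

End Mobius.

Local Close Scope ring_scope.

Definition dvd_comparable (u v : nat) : bool := (u %| v) || (v %| u).

Definition pair_gcd (C : seq nat) (g : nat) : Prop :=
  exists a b, [/\ a \in C, b \in C, a != b & g = gcdn a b].

Definition dchain_antichain (y : nat) (C : seq nat) : Prop :=
  [/\ uniq C,
      {in C, forall c, [/\ 0 < c, c %| y & c < y]},
      {in C &, forall a b, a %| b -> a = b} &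
      forall u v w, pair_gcd C u -> pair_gcd C v -> pair_gcd C w ->
        [|| dvd_comparable u v, dvd_comparable u w | dvd_comparable v w]].

Lemma dchain_antichain_sub y C C' :
  uniq C' -> {subset C' <= C} -> dchain_antichain y C -> dchain_antichain y C'.
Proof.
move=> C'_uniq C'_sub [_ C_div C_anti C_width]; split=> //.
- by move=> c /C'_sub; apply: C_div.
- by move=> a b /C'_sub a_in /C'_sub b_in; apply: C_anti.
have lift g : pair_gcd C' g -> pair_gcd C g.
  by case=> a [b [/C'_sub a_in /C'_sub b_in a_neq_b ->]]; exists a, b.
by move=> u v w /lift pu /lift pv /lift pw; apply: C_width.
Qed.

Lemma two_chains_width (A B : seq nat) u v w : is_chain A -> is_chain B ->
  (u \in A) || (u \in B) -> (v \in A) || (v \in B) -> (w \in A) || (w \in B) ->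
  [|| dvd_comparable u v, dvd_comparable u w | dvd_comparable v w].
Proof.
move=> chA chB /orP [] uX /orP [] vX /orP [] wX; rewrite /dvd_comparable;
  first [ by rewrite (chA _ _ uX vX) | by rewrite (chA _ _ uX wX) ?orbT
        | by rewrite (chA _ _ vX wX) ?orbT | by rewrite (chB _ _ uX vX)
        | by rewrite (chB _ _ uX wX) ?orbT | by rewrite (chB _ _ vX wX) ?orbT ].
Qed.

Lemma covers_antichain S x a b :
  a \in covset S x -> b \in covset S x -> a %| b -> a = b.
Proof.
move=> /covsetP [_ _ _ a_max] /covsetP [b_in b_dvd_x b_neq_x _] a_dvd_b.
apply/eqP; apply: contraNT a_max => a_neq_b; apply/hasP; exists b => //.
by rewrite a_dvd_b b_dvd_x eq_sym a_neq_b b_neq_x.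
Qed.

(* The gcd of two distinct covers lies in meetcl(C_S(x)) but not in C_S(x), hence in one
   of the two chains. *)
Lemma covers_dchain_antichain S x : all (fun x => 0 < x) S -> x \in S ->
  double_chain_gen S x -> dchain_antichain x (covset S x).
Proof.
move=> S_pos x_in [A [B [meetcl_AB _ chA chB]]]; split.
- by rewrite filter_uniq // undup_uniq.
- move=> c /covsetP [_ c_dvd_x c_neq_x _].
  have c_pos : 0 < c by exact: dvdn_gt0 (mem_pos S_pos x_in) c_dvd_x.
  by rewrite c_pos c_dvd_x ltn_neqAle c_neq_x dvdn_leq // (mem_pos S_pos x_in).
- by move=> a b; apply: covers_antichain.
have in_chains g : pair_gcd (covset S x) g -> (g \in A) || (g \in B).
  case=> a [b [a_in b_in a_neq_b ->]]; apply/orP; apply/meetcl_AB; split.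
    exists [:: a; b]; split=> //; first by rewrite /= a_in b_in.
    by rewrite !big_cons big_nil gcdn0.
  apply: contra a_neq_b => g_in; apply/eqP.
  rewrite -{1}(covers_antichain g_in a_in (dvdn_gcdl a b)).
  exact: covers_antichain g_in b_in (dvdn_gcdr a b).
move=> u v w /in_chains u_in /in_chains v_in /in_chains w_in.
exact: two_chains_width chA chB u_in v_in w_in.
Qed.

Lemma two_distinct (T : eqType) (s : seq T) : uniq s -> 1 < size s ->
  exists a b, [/\ a \in s, b \in s & a != b].
Proof.
case: s => [|a [|b s]] //= /andP [a_notin _] _; exists a, b.
by rewrite !inE !eqxx orbT; split=> //; apply: contra a_notin => /eqP ->; rewrite inE eqxx.
Qed.

Section BestPartner.
Variables (y : nat) (C : seq nat).
Hypothesis C_dchain : dchain_antichain y C.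

Lemma pair_gcd_gt0 a b : a \in C -> 0 < gcdn a b.
Proof. by case: C_dchain => _ C_div _ _ /C_div [a_pos _ _]; rewrite gcdn_gt0 a_pos. Qed.

Lemma pair_gcd_lt a b : a \in C -> b \in C -> a != b -> gcdn a b < a.
Proof.
case: C_dchain => _ C_div C_anti _ a_in b_in a_neq_b.
have [a_pos _ _] := C_div a a_in.
rewrite ltn_neqAle dvdn_leq ?dvdn_gcdl // andbT.
apply: contra a_neq_b => /eqP g_eq_a; apply/eqP; apply: C_anti => //.
by rewrite -g_eq_a dvdn_gcdr.
Qed.

Lemma exists_max_pair_gcd : 1 < size C ->
  exists c1 c2, [/\ c1 \in C, c2 \in C, c1 != c2 &
    {in C &, forall a b, a != b -> gcdn a b <= gcdn c1 c2}].
Proof.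
move=> C_size; case: (C_dchain) => C_uniq C_div _ _.
pose is_pair_gcd n := has (fun a => has (fun b => (a != b) && (gcdn a b == n)) C) C.
have pairP a b : a \in C -> b \in C -> a != b -> is_pair_gcd (gcdn a b).
  move=> a_in b_in a_neq_b; apply/hasP; exists a => //; apply/hasP; exists b => //.
  by rewrite a_neq_b eqxx.
have ex_pair : exists n, is_pair_gcd n.
  have [a [b [a_in b_in a_neq_b]]] := two_distinct C_uniq C_size.
  by exists (gcdn a b); apply: pairP.
have pair_le_y n : is_pair_gcd n -> n <= y.
  case/hasP => a a_in /hasP [b _ /andP [_ /eqP <-]]; have [a_pos _ a_lt_y] := C_div a a_in.
  exact: leq_trans (dvdn_leq a_pos (dvdn_gcdl a b)) (ltnW a_lt_y).
case: (ex_maxnP ex_pair pair_le_y) => _ /hasP [c1 c1_in /hasP [c2 c2_in /andP [c1_neq_c2 /eqP <-]]].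
by move=> max_pair; exists c1, c2; split=> // a b a_in b_in a_neq_b; apply/max_pair/pairP.
Qed.

(* The width condition forces one element of a maximal pair to be a best partner. *)
Lemma max_pair_gcd_partner c1 c2 : c1 \in C -> c2 \in C -> c1 != c2 ->
  {in C &, forall a b, a != b -> gcdn a b <= gcdn c1 c2} ->
  {in C, forall k, k != c1 -> gcdn c1 k %| gcdn c1 c2} \/
  {in C, forall l, l != c2 -> gcdn c2 l %| gcdn c2 c1}.
Proof.
move=> c1_in c2_in c1_neq_c2 max_pair; case: (C_dchain) => _ _ _ C_width.
set m := gcdn c1 c2.
have pairP a b : a \in C -> b \in C -> a != b -> pair_gcd C (gcdn a b).
  by move=> a_in b_in a_neq_b; exists a, b.
(* a pair gcd not dividing m cannot be a multiple of m either, m being maximal *)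
have incomparable a k : a \in C -> k \in C -> a != k -> ~~ (gcdn a k %| m) ->
    ~~ dvd_comparable m (gcdn a k).
  move=> a_in k_in a_neq_k g_ndvd; rewrite /dvd_comparable negb_or g_ndvd andbT.
  apply: contra g_ndvd => m_dvd_g.
  suff -> : gcdn a k = m by [].
  by apply/eqP; rewrite eqn_leq max_pair // dvdn_leq ?pair_gcd_gt0.
have [best1|] := boolP (all (fun k => (k != c1) ==> (gcdn c1 k %| m)) C).
  by left=> k k_in k_neq_c1; apply: (implyP (allP best1 k k_in)).
case/allPn => k k_in; rewrite negb_imply => /andP [k_neq_c1 g1_ndvd].
have [best2|] := boolP (all (fun l => (l != c2) ==> (gcdn c2 l %| gcdn c2 c1)) C).
  by right=> l l_in l_neq_c2; apply: (implyP (allP best2 l l_in)).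
case/allPn => l l_in; rewrite negb_imply (gcdnC c2 c1) => /andP [l_neq_c2 g2_ndvd].
rewrite eq_sym in k_neq_c1; rewrite eq_sym in l_neq_c2.
have := C_width _ _ _ (pairP _ _ c1_in c2_in c1_neq_c2)
  (pairP _ _ c1_in k_in k_neq_c1) (pairP _ _ c2_in l_in l_neq_c2).
rewrite (negbTE (incomparable _ _ c1_in k_in k_neq_c1 g1_ndvd)).
rewrite (negbTE (incomparable _ _ c2_in l_in l_neq_c2 g2_ndvd)) /=.
case/orP => [g1_dvd_g2 | g2_dvd_g1].
  by rewrite dvdn_gcd dvdn_gcdl (dvdn_trans g1_dvd_g2 (dvdn_gcdl c2 l)) in g1_ndvd.
by rewrite dvdn_gcd (dvdn_trans g2_dvd_g1 (dvdn_gcdl c1 k)) dvdn_gcdl in g2_ndvd.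
Qed.

Lemma exists_best_partner : 1 < size C ->
  exists c c0, [/\ c \in C, c0 \in C, c0 != c &
    {in C, forall c1, c1 != c -> gcdn c c1 %| gcdn c c0}].
Proof.
case/exists_max_pair_gcd => c1 [c2 [c1_in c2_in c1_neq_c2 max_pair]].
have [best|best] := max_pair_gcd_partner c1_in c2_in c1_neq_c2 max_pair.
- by exists c1, c2; rewrite eq_sym.
- by exists c2, c1.
Qed.

End BestPartner.

Local Open Scope ring_scope.

Section Positivity.
Variable R : realFieldType.

Definition natinv (n : nat) : R := (n%:R)^-1.

Lemma natinv_gt0 n : (0 < n)%N -> 0 < natinv n.
Proof. by move=> n_pos; rewrite invr_gt0 ltr0n. Qed.

Lemma natinv_lt a b : (0 < a)%N -> (a < b)%N -> natinv b < natinv a.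
Proof.
move=> a_pos a_lt_b; have b_pos : (0 < b)%N by apply: ltn_trans a_lt_b.
by rewrite ltf_pV2 ?posrE ?ltr0n ?ltr_nat.
Qed.

(* For a proper common divisor g of two distinct c, c0: 1/c + 1/c0 < 1/g, since
   c = a g, c0 = b g with 2 <= a < b or 2 <= b < a, whence a + b < a b. *)
Lemma natinv_add_lt g c c0 : (0 < g)%N -> (g %| c)%N -> (g %| c0)%N ->
  (g < c)%N -> (g < c0)%N -> c != c0 -> natinv c + natinv c0 < natinv g.
Proof.
move=> g_pos /dvdnP [a ->] /dvdnP [b ->] g_lt_c g_lt_c0 c_neq_c0.
have a_gt1 : (1 < a)%N by nia.
have b_gt1 : (1 < b)%N by nia.
have a_neq_b : a != b by apply: contraNneq c_neq_c0 => ->.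
have sum_lt_prod : (a + b < a * b)%N by nia.
have pos n : (0 < n)%N -> (n%:R : R) != 0 by move=> ?; rewrite pnatr_eq0 -lt0n.
rewrite /natinv !natrM.
have -> : (a%:R * g%:R)^-1 + (b%:R * g%:R)^-1
          = (a%:R + b%:R) / (a%:R * b%:R) * (g%:R : R)^-1.
  by field; rewrite !pos //; lia.
rewrite gtr_pMl ?invr_gt0 ?ltr0n // ltr_pdivrMr -?natrD -?natrM ?mul1r ?ltr_nat ?ltr0n //; lia.
Qed.

(* With at least two covers, each removal of a cover with its best partner increases the
   inclusion-exclusion, and the last two covers already push it above 1/y. *)
Lemma incl_excl_natinv_gt y C : (0 < y)%N -> dchain_antichain y C -> (1 < size C)%N ->
  natinv y < incl_excl natinv y C.
Proof.
move=> y_pos; have [k] := ubnP (size C); elim: k C => // k IH C size_lt C_dchain C_size.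
have [c [c0 [c_in c0_in c0_neq_c partner]]] := exists_best_partner C_dchain C_size.
case: (C_dchain) => C_uniq C_div _ _; have [_ c_dvd_y _] := C_div c c_in.
rewrite (incl_excl_remove _ C_uniq c_in c_dvd_y c0_in c0_neq_c partner).
have c_neq_c0 : c != c0 by rewrite eq_sym.
have g_pos := pair_gcd_gt0 C_dchain c0 c_in.
have g_lt_c := pair_gcd_lt C_dchain c_in c0_in c_neq_c0.
have c0_rest : c0 \in rem c C by rewrite mem_rem_uniq // inE c0_neq_c.
have [rest_size | rest_small] := ltnP 1 (size (rem c C)).
- have rest_dchain : dchain_antichain y (rem c C).
    by apply: dchain_antichain_sub C_dchain; [apply: rem_uniq | apply: mem_rem].
  have rest_lt : (size (rem c C) < k)%N by rewrite size_rem // -ltnS prednK ?(ltn_trans _ C_size).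
  have := IH _ rest_lt rest_dchain rest_size; have := natinv_lt g_pos g_lt_c.
  by lra.
- (* the last two covers c, c0: the sum is 1/y - 1/c0 - 1/c + 1/gcd(c, c0) *)
  move: rest_small c0_rest; case: (rem c C) => [|d [|]] //= _; rewrite inE => /eqP <-.
  have [_ c0_dvd_y _] := C_div c0 c0_in.
  rewrite incl_excl_cons !incl_excl_nil (gcdn_idPr c0_dvd_y).
  have g_lt_c0 := pair_gcd_lt C_dchain c0_in c_in c0_neq_c; rewrite gcdnC in g_lt_c0.
  have := natinv_add_lt g_pos (dvdn_gcdl c c0) (dvdn_gcdr c c0) g_lt_c g_lt_c0 c_neq_c0.
  by lra.
Qed.

Lemma incl_excl_natinv_neq0 y C : (0 < y)%N -> dchain_antichain y C ->
  incl_excl natinv y C != 0.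
Proof.
move=> y_pos; case: C => [|c [|c' C']] C_dchain.
- by rewrite incl_excl_nil gt_eqF ?natinv_gt0.
- case: C_dchain => _ C_div _ _; have [c_pos c_dvd_y c_lt_y] := C_div c (mem_head c [::]).
  by rewrite incl_excl_cons !incl_excl_nil (gcdn_idPr c_dvd_y) subr_eq0 lt_eqF ?natinv_lt.
- by rewrite gt_eqF // (lt_trans (natinv_gt0 y_pos)) ?incl_excl_natinv_gt.
Qed.

End Positivity.

Local Close Scope ring_scope.
Unset Implicit Arguments.

Theorem theorem4p2 (S : seq nat) (xi : nat) :
  all (fun x => 0 < x) S -> gcd_closed S -> xi \in S ->
  double_chain_gen S xi -> Psi_inv S xi <> 0%R.
Proof.
move=> S_pos S_closed xi_in xi_dchain.
have Psi_covers : Psi_inv S xi = incl_excl (@natinv rat) xi (covset S xi).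
  by rewrite -mobius_sum_covers //; apply: eq_bigr => d _; apply: mulrzl.
rewrite Psi_covers; apply/eqP; apply: incl_excl_natinv_neq0 (mem_pos S_pos xi_in) _.
exact: covers_dchain_antichain S_pos xi_in xi_dchain.
Qed.
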